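(* Let $n\ge 3$. A polygon $Q\in\mathbf S(s_1,\dots,s_n)$ is a critical point of the restriction of $\mathcal P$ to the smooth manifold $\mathbf S(s_1,\dots,s_n)$ if and only if $Q$ is tangential.
   Context: Fix $n\ge 3$ pairwise non-parallel lines $s_1,\dots,s_n\subset\mathbb{R}^2$ through the origin, each with a fixed direction $\vec s_i$. For lines $e_i\parallel s_i$, $Q=Q(e_1,\dots,e_n)$ is the closed polygon with consecutive vertices $v_i=e_i\cap e_{i+1}$ (indices mod $n$), and $\widetilde{\mathbf S}(s_1,\dots,s_n)$ is the space of such polygons modulo translations. Oriented area: $\mathcal A=\frac12\sum_i(x_iy_{i+1}-x_{i+1}y_i)$ for vertices $v_i=(x_i,y_i)$. $\mathbf S(s_1,\dots,s_n)=\{Q\in\widetilde{\mathbf S}:|\mathcal A(Q)|=1\}$. Each $e_i$ is oriented along $\vec s_i$, giving $\vec e_i$; the perimeter is $\mathcal P(Q)=\sum_i\operatorname{sign}_Q(i)|v_iv_{i+1}|$ with $\operatorname{sign}_Q(i)=1$ if $\vec e_i$ is codirected with $\overrightarrow{v_iv_{i+1}}$ and $-1$ otherwise (a linear function on $\widetilde{\mathbf S}$). $Q$ is tangential if there is a circle $\sigma$ tangent to every $e_i$ such that either $\sigma$ lies to the left of all $\vec e_i$ or $\sigma$ lies to the right of all $\vec e_i$. *)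

From Stdlib Require Import Reals Lra Lia Arith.
Open Scope R_scope.

(* Conventions.
   - Indices are natural numbers taken modulo n.
   - The direction of s_i is the vector (sx i, sy i).
   - cross (a1,a2) (b1,b2) := a1*b2 - a2*b1.
   - A line e_i parallel to s_i is encoded by its offset c i :
       e_i = { p | cross s_i p = c i }.
     Every line parallel to s_i has exactly one such offset, so a polygon
     Q(e_1,...,e_n) is given by the offset vector c : nat -> R
     (only c 0, ..., c (n-1) matter). *)

Definition cross (a1 a2 b1 b2 : R) : R := a1 * b2 - a2 * b1.

Definition on_line (n : nat) (sx sy c : nat -> R) (i : nat) (x y : R) : Prop :=
  cross (sx (i mod n)) (sy (i mod n)) x y = c (i mod n).

(* Vertex v_i = e_i ∩ e_{i+1} (indices mod n), by Cramer's rule. *)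
Definition vx (n : nat) (sx sy c : nat -> R) (i : nat) : R :=
  let j := (i mod n)%nat in let k := ((i + 1) mod n)%nat in
  (c j * sx k - c k * sx j) / cross (sx j) (sy j) (sx k) (sy k).

Definition vy (n : nat) (sx sy c : nat -> R) (i : nat) : R :=
  let j := (i mod n)%nat in let k := ((i + 1) mod n)%nat in
  (c j * sy k - c k * sy j) / cross (sx j) (sy j) (sx k) (sy k).

Lemma vertex_on_lines (n : nat) (sx sy c : nat -> R) (i : nat) :
  let j := (i mod n)%nat in let k := ((i + 1) mod n)%nat in
  cross (sx j) (sy j) (sx k) (sy k) <> 0 ->
  on_line n sx sy c i (vx n sx sy c i) (vy n sx sy c i) /\
  on_line n sx sy c (i + 1) (vx n sx sy c i) (vy n sx sy c i).
Proof.
  intros j k H. unfold on_line, vx, vy, cross in *. fold j k. split; field; exact H.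
Qed.

Definition Area (n : nat) (sx sy c : nat -> R) : R :=
  / 2 * sum_f_R0 (fun i => vx n sx sy c i * vy n sx sy c (i + 1)
                         - vx n sx sy c (i + 1) * vy n sx sy c i) (n - 1).

(* Edge i is the segment v_i v_{i+1}; it lies on the line e_{i+1}
   (as v_i, v_{i+1} are both on e_{i+1}). *)
Definition edge_dx (n : nat) (sx sy c : nat -> R) (i : nat) : R :=
  vx n sx sy c (i + 1) - vx n sx sy c i.
Definition edge_dy (n : nat) (sx sy c : nat -> R) (i : nat) : R :=
  vy n sx sy c (i + 1) - vy n sx sy c i.

Definition edge_sign (n : nat) (sx sy c : nat -> R) (i : nat) : R :=
  let k := ((i + 1) mod n)%nat in
  if Rlt_dec 0 (edge_dx n sx sy c i * sx k + edge_dy n sx sy c i * sy k)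
  then 1 else -1.

Definition edge_len (n : nat) (sx sy c : nat -> R) (i : nat) : R :=
  sqrt (edge_dx n sx sy c i ^ 2 + edge_dy n sx sy c i ^ 2).

Definition Perim (n : nat) (sx sy c : nat -> R) : R :=
  sum_f_R0 (fun i => edge_sign n sx sy c i * edge_len n sx sy c i) (n - 1).

Definition dist_to_line (n : nat) (sx sy c : nat -> R) (i : nat) (x y : R) : R :=
  let j := (i mod n)%nat in
  Rabs (cross (sx j) (sy j) x y - c j) / sqrt (sx j ^ 2 + sy j ^ 2).

Definition circle_left_of (n : nat) (sx sy c : nat -> R) (i : nat) (ox oy r : R) : Prop :=
  forall x y, (x - ox) ^ 2 + (y - oy) ^ 2 = r ^ 2 ->
    cross (sx (i mod n)) (sy (i mod n)) x y - c (i mod n) >= 0.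

Definition circle_right_of (n : nat) (sx sy c : nat -> R) (i : nat) (ox oy r : R) : Prop :=
  forall x y, (x - ox) ^ 2 + (y - oy) ^ 2 = r ^ 2 ->
    cross (sx (i mod n)) (sy (i mod n)) x y - c (i mod n) <= 0.

Definition Tangential (n : nat) (sx sy c : nat -> R) : Prop :=
  exists ox oy r : R, 0 < r /\
    (forall i, (i < n)%nat -> dist_to_line n sx sy c i ox oy = r) /\
    ((forall i, (i < n)%nat -> circle_left_of n sx sy c i ox oy r) \/
     (forall i, (i < n)%nat -> circle_right_of n sx sy c i ox oy r)).

(* Q is a critical point of P restricted to S = {|A| = 1}: for every curve g
   in the space of polygons, passing through Q at t = 0, differentiable at 0,
   and staying in S for t near 0, the derivative of P along g at 0 vanishes.
   (Curves are taken in offset space R^n; P and A are translation invariant and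
   curves in the quotient by translations lift to R^n, so this is the same as
   criticality on S ⊂ S~ = R^n / translations.) *)
Definition Critical (n : nat) (sx sy c : nat -> R) : Prop :=
  forall g : R -> nat -> R,
    (forall i, (i < n)%nat -> g 0 i = c i) ->
    (forall i, (i < n)%nat -> exists l, derivable_pt_lim (fun t => g t i) 0 l) ->
    (exists eps, 0 < eps /\ forall t, Rabs t < eps -> Rabs (Area n sx sy (g t)) = 1) ->
    derivable_pt_lim (fun t => Perim n sx sy (g t)) 0 0.

From Stdlib Require Import Reals Lra Lia.
Open Scope R_scope.

(* In offset coordinates the edge v_i v_{i+1} is [edge_coef c i] times s_{i+1}, with
   [edge_coef] linear in c.  Hence -2 Area is the quadratic form of a symmetric bilinear
   form B, and the perimeter is the linear form B(., |s|) with |s|_k = |s_k|.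
   Criticality on {|Area| = 1} is the Lagrange condition: B(w, |s|) = 0 whenever
   B(c, w) = 0, so |s| - mu c lies in the radical of B for some mu.  Vectors in the
   radical have all edges zero, i.e. they are offsets of lines through one point o; and
   |s| itself is not of this form, since no point is at signed distance 1 from three
   pairwise non-parallel lines through the origin.  So mu <> 0 and
   c = pencil(-o/mu) + |s|/mu: the lines e_k are tangent to the circle of radius 1/|mu|
   about -o/mu, all on the same side.  Conversely, for such c the derivative of the
   perimeter along a curve is a nonzero multiple of that of the area. *)

Lemma derivable_pt_lim_add (f g : R -> R) x l1 l2 :
  derivable_pt_lim f x l1 -> derivable_pt_lim g x l2 ->
  derivable_pt_lim (fun t => f t + g t) x (l1 + l2).
Proof. intros; apply derivable_pt_lim_plus; auto. Qed.

Lemma derivable_pt_lim_mul (f g : R -> R) x l1 l2 :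
  derivable_pt_lim f x l1 -> derivable_pt_lim g x l2 ->
  derivable_pt_lim (fun t => f t * g t) x (l1 * g x + f x * l2).
Proof. intros; apply derivable_pt_lim_mult; auto. Qed.

Lemma derivable_pt_lim_scale (f : R -> R) a x l :
  derivable_pt_lim f x l -> derivable_pt_lim (fun t => a * f t) x (a * l).
Proof.
  intros H. replace (a * l) with (0 * f x + a * l) by ring.
  apply (derivable_pt_lim_mul (fun _ => a)); auto. apply derivable_pt_lim_const.
Qed.

Lemma derivable_pt_lim_eq (f : R -> R) x l l' :
  derivable_pt_lim f x l -> l = l' -> derivable_pt_lim f x l'.
Proof. intros H <-. exact H. Qed.

Lemma derivable_pt_lim_sum (F : nat -> R -> R) (l : nat -> R) x N :
  (forall i, (i <= N)%nat -> derivable_pt_lim (F i) x (l i)) ->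
  derivable_pt_lim (fun t => sum_f_R0 (fun i => F i t) N) x (sum_f_R0 l N).
Proof.
  induction N as [|N IH]; intros H; simpl.
  - apply H; lia.
  - apply derivable_pt_lim_add; [apply IH; intros; apply H|apply H]; lia.
Qed.

Lemma derivable_pt_lim_inv_sqrt_quad b :
  derivable_pt_lim (fun t => / sqrt (1 + b * (t * t))) 0 0.
Proof.
  set (phi := fun t => 1 + b * (t * t)).
  assert (Hphi0 : phi 0 = 1) by (unfold phi; ring).
  assert (Dphi : derivable_pt_lim phi 0 0).
  { replace 0 with (0 + b * (1 * 0 + 0 * 1)) at 2 by ring.
    apply (derivable_pt_lim_add (fun _ => 1)); [apply derivable_pt_lim_const|].
    apply derivable_pt_lim_scale, (derivable_pt_lim_mul (fun t => t) (fun t => t));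
      apply derivable_pt_lim_id. }
  assert (Dsqrt : derivable_pt_lim (comp sqrt phi) 0 (/ (2 * sqrt (phi 0)) * 0)).
  { apply derivable_pt_lim_comp; auto. apply derivable_pt_lim_sqrt. lra. }
  assert (Hsqrt0 : comp sqrt phi 0 = 1) by (unfold comp; rewrite Hphi0; apply sqrt_1).
  pose proof (derivable_pt_lim_div (fun _ => 1) (comp sqrt phi) 0 0 _
                (derivable_pt_lim_const 1 0) Dsqrt ltac:(lra)) as Hdiv.
  replace 0 with ((0 * comp sqrt phi 0 - / (2 * sqrt (phi 0)) * 0 * 1) / (comp sqrt phi 0)²)
    at 2 by (rewrite Hsqrt0, Hphi0, sqrt_1; unfold Rsqr; field).
  refine (derivable_pt_lim_ext _ _ _ _ _ Hdiv). intros t. unfold div_fct, comp, phi, Rdiv. ring.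
Qed.

(* By continuity f cannot jump between the values 1 and -1, so it is locally constant. *)
Lemma derivable_pt_lim_unit_abs (f : R -> R) l :
  derivable_pt_lim f 0 l ->
  (exists eps, 0 < eps /\ forall t, Rabs t < eps -> Rabs (f t) = 1) -> l = 0.
Proof.
  intros Hd [eps [Heps Hunit]].
  assert (Hcont : continuity_pt f 0) by (apply derivable_continuous_pt; exists l; exact Hd).
  destruct (Hcont 1 ltac:(lra)) as [a [Ha Hnear]].
  set (r := Rmin eps a).
  assert (Hr : 0 < r) by (apply Rmin_pos; lra).
  assert (Hconst : forall t, - r < t < r -> f t = f 0).
  { intros t Ht.
    assert (Hta : Rabs t < r) by (apply Rabs_def1; lra).
    assert (F0 : Rabs (f 0) = 1) by (apply Hunit; rewrite Rabs_R0; lra).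
    assert (Ft : Rabs (f t) = 1) by (apply Hunit; eapply Rlt_le_trans; [exact Hta|apply Rmin_l]).
    destruct (Req_dec t 0) as [->|Ht0]; [reflexivity|].
    assert (Dt : Rabs (f t - f 0) < 1).
    { apply (Hnear t). split; [split; [exact I|auto]|].
      simpl. unfold Rdist. rewrite Rminus_0_r. eapply Rlt_le_trans; [exact Hta|apply Rmin_r]. }
    revert Ft F0 Dt. unfold Rabs.
    destruct (Rcase_abs (f t)), (Rcase_abs (f 0)), (Rcase_abs (f t - f 0)); intros; lra. }
  assert (Hd0 : derivable_pt_lim f 0 0).
  { apply (derivable_pt_lim_locally_ext (fun _ => f 0) f 0 (- r) r); [lra| |].
    - intros t Ht. symmetry. apply Hconst. exact Ht.
    - apply derivable_pt_lim_const. }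
  exact (uniqueness_limite _ _ _ _ Hd Hd0).
Qed.

Lemma quad_pos_near0 b : exists eps, 0 < eps /\ forall t, Rabs t < eps -> 0 < 1 + b * (t * t).
Proof.
  set (eps := / (Rabs b + 1)). exists eps.
  pose proof (Rabs_pos b) as Hb. pose proof (Rle_abs (- b)) as Hnb. rewrite Rabs_Ropp in Hnb.
  assert (Heps : eps * (Rabs b + 1) = 1) by (unfold eps; field; lra).
  assert (Heps0 : 0 < eps) by (unfold eps; apply Rinv_0_lt_compat; lra).
  split; [exact Heps0|]. intros t Ht.
  assert (Htt : t * t = Rabs t * Rabs t) by (rewrite <- Rabs_mult; symmetry; apply Rabs_right; nra).
  pose proof (Rabs_pos t).
  assert (Hlt : t * t < eps * eps) by nra.
  assert (Hle : eps <= 1) by nra.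
  nra.
Qed.

Lemma finite_choice (P : nat -> R -> Prop) m :
  (forall i, (i < m)%nat -> exists l, P i l) ->
  exists d : nat -> R, forall i, (i < m)%nat -> P i (d i).
Proof.
  induction m as [|m IH]; intros H.
  - exists (fun _ => 0). intros; lia.
  - destruct IH as [d Hd]; [intros; apply H; lia|].
    destruct (H m ltac:(lia)) as [l Hl].
    exists (fun i => if Nat.eq_dec i m then l else d i).
    intros i Hi. destruct (Nat.eq_dec i m) as [->|E]; auto. apply Hd; lia.
Qed.

Lemma sum_f_R0_sqr_eq0 (f : nat -> R) N :
  sum_f_R0 (fun i => f i * f i) N = 0 -> forall i, (i <= N)%nat -> f i = 0.
Proof.
  induction N as [|N IH]; intros H i Hi; simpl in H.
  - replace i with 0%nat by lia. nra.
  - assert (0 <= sum_f_R0 (fun i => f i * f i) N) by (apply cond_pos_sum; intros; nra).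
    destruct (Nat.eq_dec i (S N)) as [->|E]; [nra|].
    apply IH; [nra|lia].
Qed.

Lemma cross_sqr_add_dot_sqr a b x y :
  cross a b x y ^ 2 + (a * x + b * y) ^ 2 = (a ^ 2 + b ^ 2) * (x ^ 2 + y ^ 2).
Proof. unfold cross; ring. Qed.

Lemma cross_mul_norm2 a1 b1 a2 b2 x y :
  cross a1 b1 a2 b2 * (x ^ 2 + y ^ 2)
  = cross a1 b1 x y * (a2 * x + b2 * y) - (a1 * x + b1 * y) * cross a2 b2 x y.
Proof. unfold cross; ring. Qed.

Lemma Rabs_cross_le a b x y r : 0 <= r -> x ^ 2 + y ^ 2 = r ^ 2 ->
  Rabs (cross a b x y) <= sqrt (a ^ 2 + b ^ 2) * r.
Proof.
  intros Hr Hxy.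
  assert (Hab : 0 <= a ^ 2 + b ^ 2) by (apply Rplus_le_le_0_compat; apply pow2_ge_0).
  rewrite <- (Rabs_right (sqrt _ * r)) by (apply Rle_ge, Rmult_le_pos; auto using sqrt_pos).
  apply Rsqr_le_abs_0. rewrite Rsqr_mult, Rsqr_sqrt by exact Hab.
  pose proof (cross_sqr_add_dot_sqr a b x y) as E. rewrite Hxy in E.
  pose proof (pow2_ge_0 (a * x + b * y)). unfold Rsqr. nra.
Qed.

Section Polygon.
Variable n : nat.
Variables sx sy : nat -> R.
Hypothesis Hn : (3 <= n)%nat.
Hypothesis Hnonpar : forall i j, (i < n)%nat -> (j < n)%nat -> i <> j ->
  cross (sx i) (sy i) (sx j) (sy j) <> 0.

Definition next_idx (i : nat) : nat := ((i + 1) mod n)%nat.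
Definition prev_idx (i : nat) : nat := ((i + n - 1) mod n)%nat.

Definition det (i j : nat) : R := cross (sx i) (sy i) (sx j) (sy j).

Definition slen (k : nat) : R := sqrt (sx k ^ 2 + sy k ^ 2).

(* Edge i (from v_i to v_{i+1}) equals [edge_coef c i] times the direction of s_{i+1}. *)
Definition edge_coef (c : nat -> R) (i : nat) : R :=
  let j := next_idx i in let k := next_idx j in
  c k / det k j - c i / det i j + c j * det k i / (det i j * det k j).

(* The polarization of the quadratic form [-2 Area]; [bform c slen] is the perimeter. *)
Definition bform (c w : nat -> R) : R :=
  sum_f_R0 (fun i => w (next_idx i) * edge_coef c i) (n - 1).

(* Offsets of the lines e_k through the point (ox, oy). *)
Definition pencil (ox oy : R) (k : nat) : R := cross (sx k) (sy k) ox oy.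

Lemma next_idx_cases i : (i < n)%nat ->
  ((i + 1 < n)%nat /\ next_idx i = (i + 1)%nat) \/ (i + 1 = n /\ next_idx i = 0)%nat.
Proof.
  intros H. unfold next_idx. destruct (Nat.eq_dec (i + 1) n) as [E|E].
  - right. rewrite E. split; [reflexivity|apply Nat.Div0.mod_same].
  - left. split; [lia|apply Nat.mod_small; lia].
Qed.

Lemma next_idx_lt i : (next_idx i < n)%nat.
Proof. apply Nat.mod_upper_bound. lia. Qed.

Lemma next_idx_neq i : (i < n)%nat -> next_idx i <> i.
Proof. intros H. destruct (next_idx_cases i H) as [[A ->]|[A ->]]; lia. Qed.

Lemma next_idx_add2 i : ((i + 1 + 1) mod n = next_idx (next_idx i))%nat.
Proof. unfold next_idx. rewrite Nat.Div0.add_mod_idemp_l. reflexivity. Qed.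

Lemma prev_next_idx i : (i < n)%nat -> prev_idx (next_idx i) = i.
Proof.
  intros H. unfold prev_idx. destruct (next_idx_cases i H) as [[_ ->]|[A ->]].
  - replace (i + 1 + n - 1)%nat with (i + 1 * n)%nat by lia.
    rewrite Nat.Div0.mod_add. apply Nat.mod_small, H.
  - replace (0 + n - 1)%nat with i by lia. apply Nat.mod_small, H.
Qed.

Lemma sum_next_idx (f : nat -> R) :
  sum_f_R0 (fun i => f (next_idx i)) (n - 1) = sum_f_R0 f (n - 1).
Proof.
  replace (n - 1)%nat with (S (n - 2)) by lia.
  rewrite tech5, (decomp_sum f (S (n - 2))) by lia. simpl pred.
  assert (Hlast : next_idx (S (n - 2)) = 0%nat).
  { destruct (next_idx_cases (S (n - 2)) ltac:(lia)) as [[A _]|[_ B]]; [lia|exact B]. }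
  rewrite Hlast, (sum_eq (fun i => f (next_idx i)) (fun i => f (S i))); [ring|].
  intros i Hi. destruct (next_idx_cases i ltac:(lia)) as [[_ ->]|[A _]]; [f_equal; lia|lia].
Qed.

Lemma det_next_neq0 i : (i < n)%nat -> det i (next_idx i) <> 0.
Proof.
  intros H. apply Hnonpar; auto using next_idx_lt. intros E. apply (next_idx_neq i H). auto.
Qed.

Lemma det_next2_neq0 i : det (next_idx (next_idx i)) (next_idx i) <> 0.
Proof. apply Hnonpar; auto using next_idx_lt. apply next_idx_neq, next_idx_lt. Qed.

Lemma vx_eq c i : (i < n)%nat ->
  vx n sx sy c i = (c i * sx (next_idx i) - c (next_idx i) * sx i) / det i (next_idx i).
Proof. intros H. unfold vx. rewrite (Nat.mod_small i n H). reflexivity. Qed.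

Lemma vy_eq c i : (i < n)%nat ->
  vy n sx sy c i = (c i * sy (next_idx i) - c (next_idx i) * sy i) / det i (next_idx i).
Proof. intros H. unfold vy. rewrite (Nat.mod_small i n H). reflexivity. Qed.

Lemma vx_succ_eq c i : vx n sx sy c (i + 1) =
  (c (next_idx i) * sx (next_idx (next_idx i)) - c (next_idx (next_idx i)) * sx (next_idx i))
  / det (next_idx i) (next_idx (next_idx i)).
Proof. unfold vx. rewrite next_idx_add2. reflexivity. Qed.

Lemma vy_succ_eq c i : vy n sx sy c (i + 1) =
  (c (next_idx i) * sy (next_idx (next_idx i)) - c (next_idx (next_idx i)) * sy (next_idx i))
  / det (next_idx i) (next_idx (next_idx i)).
Proof. unfold vy. rewrite next_idx_add2. reflexivity. Qed.

Ltac vertex_field i H :=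
  rewrite ?vx_succ_eq, ?vy_succ_eq, ?vx_eq, ?vy_eq by exact H; unfold edge_coef;
  pose proof (det_next_neq0 i H); pose proof (det_next2_neq0 i);
  pose proof (det_next_neq0 (next_idx i) (next_idx_lt i));
  unfold det, cross in *; field; auto.

Lemma edge_dx_eq c i : (i < n)%nat -> edge_dx n sx sy c i = edge_coef c i * sx (next_idx i).
Proof. intros H. unfold edge_dx. vertex_field i H. Qed.

Lemma edge_dy_eq c i : (i < n)%nat -> edge_dy n sx sy c i = edge_coef c i * sy (next_idx i).
Proof. intros H. unfold edge_dy. vertex_field i H. Qed.

Lemma area_term_eq c i : (i < n)%nat ->
  vx n sx sy c i * vy n sx sy c (i + 1) - vx n sx sy c (i + 1) * vy n sx sy c i
  = - (c (next_idx i) * edge_coef c i).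
Proof. intros H. vertex_field i H. Qed.

Lemma Area_bform c : Area n sx sy c = - / 2 * bform c c.
Proof.
  unfold Area, bform. rewrite scal_sum, scal_sum. apply sum_eq.
  intros i Hi. rewrite area_term_eq by lia. field.
Qed.

Lemma slen_sqr_pos k : (k < n)%nat -> 0 < sx k ^ 2 + sy k ^ 2.
Proof.
  intros H. pose proof (det_next_neq0 k H) as E. unfold det, cross in E.
  destruct (Req_dec (sx k) 0) as [A|A]; destruct (Req_dec (sy k) 0) as [B|B].
  - exfalso. apply E. rewrite A, B. ring.
  - pose proof (pow2_ge_0 (sx k)). nra.
  - pose proof (pow2_ge_0 (sy k)). nra.
  - pose proof (pow2_ge_0 (sy k)). nra.
Qed.

Lemma slen_pos k : (k < n)%nat -> 0 < slen k.
Proof. intros H. apply sqrt_lt_R0, slen_sqr_pos, H. Qed.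

Lemma slen_sqr k : (k < n)%nat -> slen k * slen k = sx k ^ 2 + sy k ^ 2.
Proof. intros H. apply sqrt_sqrt. left. apply slen_sqr_pos, H. Qed.

Lemma signed_edge_len c i : (i < n)%nat ->
  edge_sign n sx sy c i * edge_len n sx sy c i = edge_coef c i * slen (next_idx i).
Proof.
  intros H. unfold edge_sign, edge_len. rewrite (edge_dx_eq c i H), (edge_dy_eq c i H).
  fold (next_idx i). set (t := edge_coef c i). set (k := next_idx i).
  pose proof (slen_sqr_pos k (next_idx_lt i)) as Hk.
  replace ((t * sx k) ^ 2 + (t * sy k) ^ 2) with (t² * (sx k ^ 2 + sy k ^ 2)) by (unfold Rsqr; ring).
  rewrite sqrt_mult_alt, sqrt_Rsqr_abs by apply Rle_0_sqr. fold (slen k).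
  replace (t * sx k * sx k + t * sy k * sy k) with (t * (sx k ^ 2 + sy k ^ 2)) by ring.
  destruct (Rlt_dec 0 (t * (sx k ^ 2 + sy k ^ 2))) as [L|L].
  - rewrite Rabs_right by nra. ring.
  - rewrite Rabs_left1 by nra. ring.
Qed.

Lemma Perim_bform c : Perim n sx sy c = bform c slen.
Proof.
  unfold Perim, bform. apply sum_eq. intros i Hi. rewrite signed_edge_len by lia. ring.
Qed.

Lemma edge_coef_ext c c' i : (i < n)%nat -> (forall k, (k < n)%nat -> c k = c' k) ->
  edge_coef c i = edge_coef c' i.
Proof.
  intros H E. unfold edge_coef.
  rewrite (E i H), (E _ (next_idx_lt i)), (E _ (next_idx_lt _)). reflexivity.
Qed.

Lemma bform_ext c c' w w' :
  (forall k, (k < n)%nat -> c k = c' k) -> (forall k, (k < n)%nat -> w k = w' k) ->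
  bform c w = bform c' w'.
Proof.
  intros E F. unfold bform. apply sum_eq. intros i Hi.
  rewrite (edge_coef_ext c c' i), (F _ (next_idx_lt i)) by (auto; lia). reflexivity.
Qed.

Lemma bform_linl a b c w x :
  bform (fun k => a * c k + b * w k) x = a * bform c x + b * bform w x.
Proof.
  unfold bform. rewrite !scal_sum, <- plus_sum. apply sum_eq. intros i _.
  unfold edge_coef, Rdiv. ring.
Qed.

Lemma bform_linr a b c x y :
  bform c (fun k => a * x k + b * y k) = a * bform c x + b * bform c y.
Proof.
  unfold bform. rewrite !scal_sum, <- plus_sum. apply sum_eq. intros i _. ring.
Qed.

(* The antisymmetric part of the summand telescopes around the polygon. *)
Lemma bform_sym c w : bform c w = bform w c.
Proof.
  unfold bform.
  set (F := fun i => (w (next_idx i) * c (next_idx (next_idx i))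
                     - c (next_idx i) * w (next_idx (next_idx i)))
                    / det (next_idx (next_idx i)) (next_idx i)).
  set (G := fun i => - (w (next_idx i) * c i - c (next_idx i) * w i) / det i (next_idx i)).
  assert (HG : forall i, (i <= n - 1)%nat -> G (next_idx i) = - F i).
  { intros i Hi. pose proof (det_next2_neq0 i) as Hd. unfold G, F.
    replace (det (next_idx i) (next_idx (next_idx i)))
      with (- det (next_idx (next_idx i)) (next_idx i)) by (unfold det, cross; ring).
    field. exact Hd. }
  assert (E : sum_f_R0 (fun i => w (next_idx i) * edge_coef c i) (n - 1)
              - sum_f_R0 (fun i => c (next_idx i) * edge_coef w i) (n - 1)
            = sum_f_R0 F (n - 1) + sum_f_R0 (fun i => G (next_idx i)) (n - 1)).
  { rewrite sum_next_idx, <- minus_sum, <- plus_sum. apply sum_eq. intros i _.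
    unfold edge_coef, F, G, Rdiv. ring. }
  rewrite (sum_eq (fun i => G (next_idx i)) (fun i => F i * -1)) in E by (intros; rewrite HG by auto; ring).
  rewrite <- scal_sum in E. lra.
Qed.

Lemma edge_coef_pencil ox oy i : (i < n)%nat -> edge_coef (pencil ox oy) i = 0.
Proof. intros H. unfold pencil. vertex_field i H. Qed.

Lemma bform_pencil ox oy w : bform (pencil ox oy) w = 0.
Proof.
  unfold bform. apply sum_eq_R0. intros i Hi. rewrite edge_coef_pencil by lia. ring.
Qed.

Section Curve.
Variable g : R -> nat -> R.
Variable d : nat -> R.
Hypothesis Hg : forall k, (k < n)%nat -> derivable_pt_lim (fun t => g t k) 0 (d k).

Lemma edge_coef_derivable i : (i < n)%nat ->
  derivable_pt_lim (fun t => edge_coef (g t) i) 0 (edge_coef d i).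
Proof.
  intros Hi.
  set (j := next_idx i). set (k := next_idx j).
  assert (E : forall c, edge_coef c i
    = / det k j * c k + - / det i j * c i + det k i / (det i j * det k j) * c j).
  { intros c. unfold edge_coef, Rdiv. fold j k. ring. }
  apply (derivable_pt_lim_ext (fun t => / det k j * g t k + - / det i j * g t i
                                       + det k i / (det i j * det k j) * g t j));
    [intros; rewrite E; reflexivity|].
  rewrite E. unfold j, k.
  repeat apply derivable_pt_lim_add; apply derivable_pt_lim_scale, Hg; auto using next_idx_lt.
Qed.

Lemma bform_derivable_l w :
  derivable_pt_lim (fun t => bform (g t) w) 0 (bform d w).
Proof.
  apply (derivable_pt_lim_sum (fun i t => w (next_idx i) * edge_coef (g t) i)).
  intros i Hi. apply derivable_pt_lim_scale, edge_coef_derivable. lia.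
Qed.

Lemma bform_derivable_diag :
  derivable_pt_lim (fun t => bform (g t) (g t)) 0 (bform (g 0) d + bform d (g 0)).
Proof.
  unfold bform. rewrite <- plus_sum.
  apply (derivable_pt_lim_sum (fun i t => g t (next_idx i) * edge_coef (g t) i)).
  intros i Hi.
  apply (derivable_pt_lim_mul (fun t => g t (next_idx i)) (fun t => edge_coef (g t) i)).
  - apply Hg, next_idx_lt.
  - apply edge_coef_derivable. lia.
Qed.

Lemma Area_derivable :
  derivable_pt_lim (fun t => Area n sx sy (g t)) 0 (- bform (g 0) d).
Proof.
  apply (derivable_pt_lim_ext (fun t => - / 2 * bform (g t) (g t))); [intros; rewrite Area_bform; reflexivity|].
  replace (- bform (g 0) d) with (- / 2 * (bform (g 0) d + bform d (g 0)))
    by (rewrite (bform_sym d); field).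
  apply derivable_pt_lim_scale, bform_derivable_diag.
Qed.

Lemma Perim_derivable :
  derivable_pt_lim (fun t => Perim n sx sy (g t)) 0 (bform d slen).
Proof.
  apply (derivable_pt_lim_ext (fun t => bform (g t) slen)); [intros; rewrite Perim_bform; reflexivity|].
  apply bform_derivable_l.
Qed.

End Curve.

Lemma dist_to_line_eq c k ox oy : (k < n)%nat ->
  dist_to_line n sx sy c k ox oy = Rabs (pencil ox oy k - c k) / slen k.
Proof. intros H. unfold dist_to_line. rewrite (Nat.mod_small k n H). reflexivity. Qed.

(* Move from the centre by [m / slen k] times the normal (-sy k, sx k) of e_k. *)
Lemma circle_point_cross k ox oy m : (k < n)%nat ->
  exists x y, (x - ox) ^ 2 + (y - oy) ^ 2 = m ^ 2 /\
              cross (sx k) (sy k) x y = pencil ox oy k + m * slen k.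
Proof.
  intros H. pose proof (slen_pos k H). pose proof (slen_sqr k H).
  exists (ox - m / slen k * sy k), (oy + m / slen k * sx k). split.
  - replace (m ^ 2) with ((m / slen k) ^ 2 * (slen k * slen k)) by (field; lra).
    rewrite H1. ring.
  - unfold pencil, cross.
    transitivity (sx k * oy - sy k * ox + m / slen k * (slen k * slen k)); [rewrite H1; ring|].
    field. lra.
Qed.

Lemma tangential_offsets c : Tangential n sx sy c ->
  exists ox oy kap, kap <> 0 /\ forall k, (k < n)%nat -> c k = pencil ox oy k + kap * slen k.
Proof.
  intros [ox [oy [r [Hr [Hdist Hside]]]]].
  assert (Habs : forall k, (k < n)%nat -> Rabs (pencil ox oy k - c k) = r * slen k).
  { intros k Hk. pose proof (slen_pos k Hk). specialize (Hdist k Hk).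
    rewrite dist_to_line_eq in Hdist by exact Hk.
    rewrite <- Hdist. field. lra. }
  destruct Hside as [Hleft|Hright]; [exists ox, oy, (- r)|exists ox, oy, r];
    (split; [lra|]); intros k Hk; pose proof (slen_pos k Hk); specialize (Habs k Hk).
  - destruct (circle_point_cross k ox oy (- r) Hk) as [x [y [Hxy Hc]]].
    replace ((- r) ^ 2) with (r ^ 2) in Hxy by ring.
    specialize (Hleft k Hk x y Hxy). rewrite (Nat.mod_small k n Hk), Hc in Hleft.
    revert Habs. unfold Rabs. destruct Rcase_abs; intros; nra.
  - destruct (circle_point_cross k ox oy r Hk) as [x [y [Hxy Hc]]].
    specialize (Hright k Hk x y Hxy). rewrite (Nat.mod_small k n Hk), Hc in Hright.
    revert Habs. unfold Rabs. destruct Rcase_abs; intros; nra.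
Qed.

Lemma offsets_tangential c ox oy kap : kap <> 0 ->
  (forall k, (k < n)%nat -> c k = pencil ox oy k + kap * slen k) -> Tangential n sx sy c.
Proof.
  intros Hkap Hc. exists ox, oy, (Rabs kap).
  assert (Hr : 0 < Rabs kap) by (apply Rabs_pos_lt, Hkap).
  split; [exact Hr|split].
  - intros k Hk. pose proof (slen_pos k Hk).
    rewrite dist_to_line_eq, Hc by exact Hk.
    replace (pencil ox oy k - (pencil ox oy k + kap * slen k)) with (- (kap * slen k)) by ring.
    rewrite Rabs_Ropp, Rabs_mult, (Rabs_right (slen k)) by lra. field. lra.
  - assert (Hside : forall k x y, (k < n)%nat -> (x - ox) ^ 2 + (y - oy) ^ 2 = Rabs kap ^ 2 ->
      Rabs (cross (sx k) (sy k) x y - c k + kap * slen k) <= Rabs kap * slen k).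
    { intros k x y Hk Hxy. rewrite Hc by exact Hk.
      replace (cross (sx k) (sy k) x y - (pencil ox oy k + kap * slen k) + kap * slen k)
        with (cross (sx k) (sy k) (x - ox) (y - oy)) by (unfold pencil, cross; ring).
      rewrite Rmult_comm. apply Rabs_cross_le; auto. lra. }
    destruct (Rle_lt_dec kap 0) as [Hneg|Hpos]; [left|right]; intros k Hk x y Hxy;
      rewrite (Nat.mod_small k n Hk); pose proof (slen_pos k Hk);
      pose proof (Hside k x y Hk Hxy) as Hb.
    + rewrite (Rabs_left kap) in Hb by lra.
      pose proof (Rle_abs (- (cross (sx k) (sy k) x y - c k + kap * slen k))) as F.
      rewrite Rabs_Ropp in F. lra.
    + rewrite (Rabs_right kap) in Hb by lra.
      pose proof (Rle_abs (cross (sx k) (sy k) x y - c k + kap * slen k)). lra.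
Qed.

Lemma tangential_critical c : Tangential n sx sy c -> Critical n sx sy c.
Proof.
  intros Ht g Hg0 Hgd Hunit.
  destruct (tangential_offsets c Ht) as [ox [oy [kap [Hkap Hc]]]].
  destruct (finite_choice (fun i l => derivable_pt_lim (fun t => g t i) 0 l) n Hgd) as [d Hd].
  assert (Hg0d : bform (g 0) d = 0).
  { pose proof (derivable_pt_lim_unit_abs _ _ (Area_derivable g d Hd) Hunit). lra. }
  assert (Hdecomp : bform (g 0) d = kap * bform d slen).
  { rewrite (bform_ext (g 0) (fun k => 1 * pencil ox oy k + kap * slen k) d d)
      by (intros k Hk; first [rewrite Hg0, Hc by exact Hk; ring|reflexivity]).
    rewrite bform_linl, bform_pencil, (bform_sym slen). ring. }
  assert (Hdl : bform d slen = 0) by (apply (Rmult_eq_reg_l kap); [lra|exact Hkap]).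
  pose proof (Perim_derivable g d Hd) as HP. rewrite Hdl in HP. exact HP.
Qed.

Lemma Area_orth_comb c w a b : bform c w = 0 ->
  Area n sx sy (fun k => a * c k + b * w k) = a * a * Area n sx sy c + b * b * Area n sx sy w.
Proof.
  intros Hw. rewrite !Area_bform, bform_linl, !bform_linr, Hw, (bform_sym w c), Hw. ring.
Qed.

(* The curve rescales c + t w back onto the level set: with a = Area c and q = Area w,
   Area (c + t w) = a + q t^2 = a (1 + a q t^2) because a^2 = 1. *)
Lemma area_level_curve c w : Rabs (Area n sx sy c) = 1 -> bform c w = 0 ->
  exists G : R -> nat -> R,
    (forall k, G 0 k = c k) /\
    (forall k, derivable_pt_lim (fun t => G t k) 0 (w k)) /\
    (exists eps, 0 < eps /\ forall t, Rabs t < eps -> Rabs (Area n sx sy (G t)) = 1).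
Proof.
  intros Ha Hw.
  set (a := Area n sx sy c) in *. set (q := Area n sx sy w).
  assert (Ha2 : a * a = 1) by (revert Ha; unfold Rabs; destruct Rcase_abs; intros; nra).
  set (h := fun t => / sqrt (1 + a * q * (t * t))).
  assert (Hh0 : h 0 = 1) by (unfold h; rewrite Rmult_0_l, Rmult_0_r, Rplus_0_r, sqrt_1; apply Rinv_1).
  assert (Hh : derivable_pt_lim h 0 0) by apply derivable_pt_lim_inv_sqrt_quad.
  exists (fun t k => h t * c k + t * h t * w k). split; [|split].
  - intros k. rewrite Hh0. ring.
  - intros k. eapply derivable_pt_lim_eq.
    + apply (derivable_pt_lim_add (fun t => h t * c k) (fun t => t * h t * w k)).
      * apply (derivable_pt_lim_mul h (fun _ => c k)); [exact Hh|apply derivable_pt_lim_const].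
      * apply (derivable_pt_lim_mul (fun t => t * h t) (fun _ => w k)); [|apply derivable_pt_lim_const].
        apply (derivable_pt_lim_mul (fun t => t) h); [apply derivable_pt_lim_id|exact Hh].
    + cbv beta. rewrite Hh0. ring.
  - destruct (quad_pos_near0 (a * q)) as [eps [Heps Hpos]].
    exists eps. split; [exact Heps|]. intros t Ht. specialize (Hpos t Ht).
    rewrite (Area_orth_comb c w (h t) (t * h t) Hw). fold a q.
    assert (Hhh : h t * h t = / (1 + a * q * (t * t))).
    { unfold h. rewrite <- Rinv_mult, sqrt_sqrt by lra. reflexivity. }
    replace (h t * h t * a + t * h t * (t * h t) * q) with a; [exact Ha|].
    transitivity (h t * h t * (a + a * a * q * (t * t))); [|rewrite Ha2; ring].
    rewrite Hhh. field. lra.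
Qed.

Lemma critical_bform_slen c w : Critical n sx sy c -> Rabs (Area n sx sy c) = 1 ->
  bform c w = 0 -> bform w slen = 0.
Proof.
  intros Hcr Ha Hw.
  destruct (area_level_curve c w Ha Hw) as [G [HG0 [HGd HGa]]].
  apply (uniqueness_limite (fun t => Perim n sx sy (G t)) 0).
  - apply Perim_derivable. intros k _. apply HGd.
  - apply Hcr; [intros; apply HG0|intros i _; exists (w i); apply HGd|exact HGa].
Qed.

Lemma lagrange_radical c : bform c c <> 0 ->
  (forall w, bform c w = 0 -> bform w slen = 0) ->
  forall x, bform (fun k => 1 * slen k + - (bform c slen / bform c c) * c k) x = 0.
Proof.
  intros Hcc Horth x.
  set (w := fun k => 1 * x k + - (bform c x / bform c c) * c k).
  assert (Hw : bform c w = 0) by (unfold w; rewrite bform_linr; field; exact Hcc).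
  pose proof (Horth w Hw) as H. unfold w in H. rewrite bform_linl in H.
  rewrite bform_linl, (bform_sym slen x). field_simplify; [|exact Hcc].
  replace (bform x slen) with (bform c x / bform c c * bform c slen) by lra.
  field. exact Hcc.
Qed.

(* Testing against the vector whose (i+1)-st entry is [edge_coef u i] gives a sum of squares. *)
Lemma bform_radical_edge_coef u : (forall x, bform u x = 0) ->
  forall i, (i < n)%nat -> edge_coef u i = 0.
Proof.
  intros Hrad i Hi. specialize (Hrad (fun k => edge_coef u (prev_idx k))).
  unfold bform in Hrad.
  rewrite (sum_eq _ (fun i => edge_coef u i * edge_coef u i)) in Hrad
    by (intros j Hj; rewrite prev_next_idx by lia; reflexivity).
  exact (sum_f_R0_sqr_eq0 _ _ Hrad i ltac:(lia)).
Qed.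

(* All edges vanish, so all vertices coincide and every line passes through v_0. *)
Lemma edge_coef_eq0_pencil u : (forall i, (i < n)%nat -> edge_coef u i = 0) ->
  exists ox oy, forall j, (j < n)%nat -> u j = pencil ox oy j.
Proof.
  intros Hu.
  assert (Hv : forall i, (i < n)%nat ->
            vx n sx sy u i = vx n sx sy u 0 /\ vy n sx sy u i = vy n sx sy u 0).
  { induction i as [|i IH]; intros Hi; [auto|].
    destruct IH as [IHx IHy]; [lia|].
    pose proof (edge_dx_eq u i ltac:(lia)) as Ex. pose proof (edge_dy_eq u i ltac:(lia)) as Ey.
    unfold edge_dx, edge_dy in Ex, Ey. rewrite Hu in Ex, Ey by lia.
    replace (S i) with (i + 1)%nat by lia. split; lra. }
  exists (vx n sx sy u 0), (vy n sx sy u 0). intros j Hj.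
  destruct (vertex_on_lines n sx sy u j) as [Hon _].
  { rewrite (Nat.mod_small j n Hj). apply det_next_neq0, Hj. }
  unfold on_line in Hon. rewrite (Nat.mod_small j n Hj) in Hon.
  destruct (Hv j Hj) as [Ex Ey]. rewrite Ex, Ey in Hon. unfold pencil. rewrite Hon. reflexivity.
Qed.

(* Each unit direction u_j = s_j / |s_j| would satisfy cross(u_j, o) = 1, hence
   dot(u_j, o) = ±sqrt(|o|^2 - 1); two of u_0, u_1, u_2 share this value, and
   [cross_mul_norm2] then makes them parallel. *)
Lemma slen_not_pencil ox oy : ~ (forall j, (j < n)%nat -> slen j = pencil ox oy j).
Proof.
  intros H.
  set (e := fun j => (sx j * ox + sy j * oy) / slen j).
  assert (Hcr : forall j, (j < n)%nat -> cross (sx j) (sy j) ox oy = slen j).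
  { intros j Hj. symmetry. apply H, Hj. }
  assert (He2 : forall j, (j < n)%nat -> e j * e j = ox ^ 2 + oy ^ 2 - 1).
  { intros j Hj. pose proof (slen_pos j Hj). pose proof (slen_sqr j Hj) as Hs.
    pose proof (cross_sqr_add_dot_sqr (sx j) (sy j) ox oy) as L.
    rewrite Hcr, <- Hs in L by exact Hj. unfold e.
    replace (ox ^ 2 + oy ^ 2 - 1)
      with ((slen j * slen j * (ox ^ 2 + oy ^ 2) - slen j ^ 2) / (slen j * slen j))
      by (field; lra).
    rewrite <- L. field. lra. }
  assert (Hne : forall i j, (i < n)%nat -> (j < n)%nat -> i <> j -> e i <> e j).
  { intros i j Hi Hj Hij Eij. apply (Hnonpar i j Hi Hj Hij).
    pose proof (slen_pos i Hi). pose proof (slen_pos j Hj).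
    assert (Hp : ox ^ 2 + oy ^ 2 <> 0).
    { intros Z. pose proof (Hcr i Hi) as Ci. unfold cross in Ci.
      assert (oy = 0) by nra. assert (ox = 0) by nra. subst. lra. }
    apply (Rmult_eq_reg_r (ox ^ 2 + oy ^ 2)); [|exact Hp].
    rewrite Rmult_0_l, cross_mul_norm2, !Hcr by assumption.
    assert (Di : sx i * ox + sy i * oy = e i * slen i) by (unfold e; field; lra).
    assert (Dj : sx j * ox + sy j * oy = e j * slen j) by (unfold e; field; lra).
    rewrite Di, Dj, Eij. ring. }
  assert (Hopp : forall i j, (i < n)%nat -> (j < n)%nat -> i <> j -> e i = - e j).
  { intros i j Hi Hj Hij.
    assert (Z : (e i - e j) * (e i + e j) = 0)
      by (pose proof (He2 i Hi); pose proof (He2 j Hj); nra).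
    destruct (Rmult_integral _ _ Z) as [Z'|Z']; [|lra].
    exfalso. apply (Hne i j Hi Hj Hij). lra. }
  pose proof (Hopp 0 1 ltac:(lia) ltac:(lia) ltac:(lia))%nat.
  pose proof (Hopp 0 2 ltac:(lia) ltac:(lia) ltac:(lia))%nat.
  apply (Hne 1 2)%nat; [lia|lia|lia|lra].
Qed.

Lemma critical_tangential c : Rabs (Area n sx sy c) = 1 ->
  Critical n sx sy c -> Tangential n sx sy c.
Proof.
  intros Ha Hcr.
  assert (Hcc : bform c c <> 0).
  { intros Z. rewrite Area_bform, Z, Rmult_0_r, Rabs_R0 in Ha. lra. }
  set (mu := bform c slen / bform c c).
  pose proof (lagrange_radical c Hcc (fun w => critical_bform_slen c w Hcr Ha)) as Hrad.
  fold mu in Hrad.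
  destruct (edge_coef_eq0_pencil _ (bform_radical_edge_coef _ Hrad)) as [ox [oy Hu]].
  assert (Hmu : mu <> 0).
  { intros Z. apply (slen_not_pencil ox oy). intros j Hj.
    rewrite <- Hu by exact Hj. rewrite Z. ring. }
  apply (offsets_tangential c (- ox / mu) (- oy / mu) (/ mu)); [apply Rinv_neq_0_compat, Hmu|].
  intros k Hk. specialize (Hu k Hk).
  replace (c k) with ((1 * slen k - pencil ox oy k) / mu) by (rewrite <- Hu; field; exact Hmu).
  unfold pencil, cross. field. exact Hmu.
Qed.

End Polygon.

Theorem mainTheorem5 (n : nat) (sx sy : nat -> R) (c : nat -> R) :
  (3 <= n)%nat ->
  (forall i j, (i < n)%nat -> (j < n)%nat -> i <> j ->
     cross (sx i) (sy i) (sx j) (sy j) <> 0) ->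
  Rabs (Area n sx sy c) = 1 ->
  (Critical n sx sy c <-> Tangential n sx sy c).
Proof.
  intros Hn Hnonpar Ha. split.
  - apply critical_tangential; assumption.
  - apply tangential_critical; assumption.
Qed.
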